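(* Let $n\ge 2$, let $p, p', s \in B_{n}$ be braids satisfying $p' = s*p$ in $B_{n+1}$, and let $s'\in B_{n+1}$. Then $$p'\, \delta_{n+1}^{-1} = s' \cdot d(p)\, \sigma_1\, \delta_{n+1}^{-1} \cdot s'^{-1} \ \text{ in } B_{n+1} \iff s'^{-1} s\in C_{B_{n+1}}\big(d(p)\, \sigma_1\, \delta_{n+1}^{-1}\big),$$ where $C_{B_{n+1}}(x)$ denotes the centralizer of $x$ in $B_{n+1}$.
   Context: $B_m$ denotes the braid group on $m$ strands with Artin generators $\sigma_1,\dots,\sigma_{m-1}$ and relations $\sigma_i\sigma_j\sigma_i=\sigma_j\sigma_i\sigma_j$ for $|i-j|=1$, $\sigma_i\sigma_j=\sigma_j\sigma_i$ for $|i-j|>1$; $B_\infty$ is the braid group on generators $\sigma_1,\sigma_2,\dots$ with the same relations, and $B_m\subset B_{m+1}\subset B_\infty$ via the generators. The shift $d$ is the monomorphism of $B_\infty$ induced by $\sigma_{i_1}^{\varepsilon_1}\cdots\sigma_{i_k}^{\varepsilon_k}\mapsto \sigma_{i_1+1}^{\varepsilon_1}\cdots\sigma_{i_k+1}^{\varepsilon_k}$. The shifted conjugacy operator is $a*b = a\cdot d(b)\cdot \sigma_1\cdot d(a^{-1})$ for $a,b\in B_\infty$. Also $\delta_{n+1} = \sigma_{n}\sigma_{n-1}\cdots\sigma_1 \in B_{n+1}$. *)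

(* braid groups given by their Artin presentation, as words
   in the generators modulo the congruence generated by the relations. *)
From Stdlib Require Import List Arith.
Import ListNotations.

(* A letter (i, true) is sigma_i, (i, false) is sigma_i^{-1}. *)
Definition letter : Type := (nat * bool)%type.
Definition word : Type := list letter.

Definition in_B (m : nat) (w : word) : Prop :=
  Forall (fun l : letter => 1 <= fst l /\ fst l < m) w.

Inductive brel (m : nat) : word -> word -> Prop :=
| br_cancel : forall i b, 1 <= i < m ->
    brel m [(i, b); (i, negb b)] []
| br_braid : forall i j, 1 <= i < m -> 1 <= j < m -> (i = S j \/ j = S i) ->
    brel m [(i, true); (j, true); (i, true)] [(j, true); (i, true); (j, true)]
| br_comm : forall i j, 1 <= i < m -> 1 <= j < m -> (S i < j \/ S j < i) ->
    brel m [(i, true); (j, true)] [(j, true); (i, true)].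

Inductive beq (m : nat) : word -> word -> Prop :=
| beq_step : forall u v x y, brel m x y -> beq m (u ++ x ++ v) (u ++ y ++ v)
| beq_refl : forall w, beq m w w
| beq_sym : forall w1 w2, beq m w1 w2 -> beq m w2 w1
| beq_trans : forall w1 w2 w3, beq m w1 w2 -> beq m w2 w3 -> beq m w1 w3.

Definition winv (w : word) : word :=
  rev (map (fun l : letter => (fst l, negb (snd l))) w).

Definition dshift (w : word) : word :=
  map (fun l : letter => (S (fst l), snd l)) w.

Definition sig (i : nat) : word := [(i, true)].

(* delta_word n = sigma_n sigma_{n-1} ... sigma_1 (= delta_{n+1}). *)
Fixpoint delta_word (n : nat) : word :=
  match n with
  | 0 => []
  | S k => (S k, true) :: delta_word k
  end.

(* Shifted conjugacy a * b = a . d(b) . sigma_1 . d(a^{-1}). *)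
Definition sconj (a b : word) : word :=
  a ++ dshift b ++ sig 1 ++ dshift (winv a).

Definition centralizes (m : nat) (g x : word) : Prop :=
  beq m (g ++ x) (x ++ g).

(* For w in B_n the braid delta_{n+1} shifts w, i.e. delta_{n+1} d(w) = w delta_{n+1}.
   Hence the hypothesis p' = s*p rewrites p' delta_{n+1}^{-1} as the conjugate
   s x s^{-1} of x = d(p) sigma_1 delta_{n+1}^{-1}, and two conjugates s x s^{-1}
   and s' x s'^{-1} agree exactly when s'^{-1} s commutes with x. *)
From Stdlib Require Import List Arith Lia Setoid Morphisms.
Import ListNotations.

#[export] Instance beq_Equivalence m : Equivalence (beq m).
Proof. split; [exact (beq_refl m) | exact (beq_sym m) | exact (beq_trans m)]. Qed.

Lemma beq_app_in_context m u v a b : beq m a b -> beq m (u ++ a ++ v) (u ++ b ++ v).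
Proof.
  induction 1 as [u0 v0 x y Hxy| | |]; try (econstructor; eassumption).
  - replace (u ++ (u0 ++ x ++ v0) ++ v) with ((u ++ u0) ++ x ++ (v0 ++ v))
      by now rewrite <- !app_assoc.
    replace (u ++ (u0 ++ y ++ v0) ++ v) with ((u ++ u0) ++ y ++ (v0 ++ v))
      by now rewrite <- !app_assoc.
    now apply beq_step.
Qed.

#[export] Instance app_beq_Proper m : Proper (beq m ==> beq m ==> beq m) (@app letter).
Proof.
  intros a a' Ha b b' Hb. transitivity (a' ++ b).
  - exact (beq_app_in_context m [] b a a' Ha).
  - pose proof (beq_app_in_context m a' [] b b' Hb) as H. now rewrite !app_nil_r in H.
Qed.

#[export] Instance cons_beq_Proper m : Proper (eq ==> beq m ==> beq m) (@cons letter).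
Proof. intros l l' <- a a' Ha. exact (app_beq_Proper m [l] [l] (beq_refl m _) a a' Ha). Qed.

Lemma brel_beq m x y v : brel m x y -> beq m (x ++ v) (y ++ v).
Proof. exact (beq_step m [] v x y). Qed.

Lemma in_B_mono m m' w : m <= m' -> in_B m w -> in_B m' w.
Proof. intros Hm. apply Forall_impl. intros l Hl. lia. Qed.

Lemma in_B_sig m i : 1 <= i < m -> in_B m (sig i).
Proof. now repeat constructor. Qed.

Lemma in_B_delta_word m n : n < m -> in_B m (delta_word n).
Proof. induction n; intros; constructor; simpl; [lia | apply IHn; lia]. Qed.

Lemma in_B_winv m w : in_B m w -> in_B m (winv w).
Proof.
  intro Hw. apply Forall_rev. apply Forall_map. eapply Forall_impl; [|exact Hw]. easy.
Qed.

Lemma winv_cons l w : winv (l :: w) = winv w ++ [(fst l, negb (snd l))].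
Proof. reflexivity. Qed.

Lemma winv_involutive w : winv (winv w) = w.
Proof.
  unfold winv. rewrite map_rev, rev_involutive, map_map.
  erewrite map_ext; [apply map_id|]. intros [i b]. simpl. now rewrite Bool.negb_involutive.
Qed.

Section Group.
Variable m : nat.

Lemma app_winv_cancel w v : in_B m w -> beq m (w ++ winv w ++ v) v.
Proof.
  revert v. induction w as [|[i b] w IH]; intros v Hw; [reflexivity|].
  inversion_clear Hw as [|? ? Hi Hw'].
  rewrite winv_cons, <- app_comm_cons, <- app_assoc, IH by exact Hw'.
  exact (brel_beq m [(i, b); (i, negb b)] [] v (br_cancel m i b Hi)).
Qed.

Lemma winv_app_cancel w v : in_B m w -> beq m (winv w ++ w ++ v) v.
Proof.
  intro Hw. rewrite <- (winv_involutive w) at 2.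
  now apply app_winv_cancel, in_B_winv.
Qed.

Lemma app_winv w : in_B m w -> beq m (w ++ winv w) [].
Proof. intro Hw. rewrite <- (app_nil_r (winv w)). now apply app_winv_cancel. Qed.

Lemma winv_app w : in_B m w -> beq m (winv w ++ w) [].
Proof. intro Hw. rewrite <- (app_nil_r w) at 2. now apply winv_app_cancel. Qed.

Lemma beq_app_cancel_l w a b : in_B m w -> beq m (w ++ a) (w ++ b) <-> beq m a b.
Proof.
  intro Hw. split; [|now intros ->].
  intro H. rewrite <- (winv_app_cancel w a), <- (winv_app_cancel w b), H by exact Hw.
  reflexivity.
Qed.

Lemma beq_app_cancel_r w a b : in_B m w -> beq m (a ++ w) (b ++ w) <-> beq m a b.
Proof.
  intro Hw. split; [|now intros ->].
  intro H. transitivity ((a ++ w) ++ winv w).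
  - now rewrite <- app_assoc, app_winv, app_nil_r.
  - now rewrite H, <- app_assoc, app_winv, app_nil_r.
Qed.

Lemma conj_beq_iff_centralizes a b x : in_B m a -> in_B m b ->
  beq m (a ++ x ++ winv a) (b ++ x ++ winv b) <-> centralizes m (winv b ++ a) x.
Proof.
  intros Ha Hb. unfold centralizes.
  rewrite <- (beq_app_cancel_l (winv b) (a ++ x ++ winv a)), winv_app_cancel
    by auto using in_B_winv.
  rewrite <- (beq_app_cancel_r a (winv b ++ a ++ x ++ winv a)) by exact Ha.
  rewrite <- !app_assoc, winv_app, app_nil_r by exact Ha.
  reflexivity.
Qed.

Lemma semiconj_winv a b c : in_B m b -> in_B m c ->
  beq m (a ++ b) (c ++ a) -> beq m (a ++ winv b) (winv c ++ a).
Proof.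
  intros Hb Hc H. rewrite <- (beq_app_cancel_r b) by exact Hb.
  rewrite <- !app_assoc, winv_app, app_nil_r, H, winv_app_cancel by assumption.
  reflexivity.
Qed.

Lemma semiconj_winv_conj a b c : in_B m a ->
  beq m (a ++ b) (c ++ a) -> beq m (b ++ winv a) (winv a ++ c).
Proof.
  intros Ha H. rewrite <- (beq_app_cancel_l a) by exact Ha.
  rewrite app_winv_cancel, app_assoc, H, <- app_assoc, app_winv, app_nil_r by exact Ha.
  reflexivity.
Qed.

End Group.

Lemma delta_word_comm m n c : S n < c < m ->
  beq m (delta_word n ++ sig c) (sig c ++ delta_word n).
Proof.
  induction n as [|k IH]; intros Hc; simpl; [reflexivity|].
  rewrite IH by lia.
  apply (brel_beq m [(S k, true); (c, true)] [(c, true); (S k, true)]).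
  apply br_comm; lia.
Qed.

Lemma delta_word_sig_succ m n i : 1 <= i < n -> n < m ->
  beq m (delta_word n ++ sig (S i)) (sig i ++ delta_word n).
Proof.
  revert i. induction n as [|k IH]; intros i Hi Hn; [lia|].
  destruct (Nat.lt_ge_cases i k) as [Hik|Hik]; simpl.
  - rewrite IH by lia.
    apply (brel_beq m [(S k, true); (i, true)] [(i, true); (S k, true)]).
    apply br_comm; lia.
  - assert (i = k) as -> by lia. destruct k as [|j]; [lia|]. simpl.
    rewrite (delta_word_comm m j (S (S j))) by lia.
    apply (brel_beq m [(S (S j), true); (S j, true); (S (S j), true)]
                      [(S j, true); (S (S j), true); (S j, true)]).
    apply br_braid; lia.
Qed.

Lemma delta_word_letter m n i b : 1 <= i < n -> n < m ->
  beq m (delta_word n ++ [(S i, b)]) ([(i, b)] ++ delta_word n).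
Proof.
  intros Hi Hn. destruct b.
  - now apply delta_word_sig_succ.
  - apply (semiconj_winv m (delta_word n) (sig (S i)) (sig i)).
    + apply in_B_sig; lia.
    + apply in_B_sig; lia.
    + now apply delta_word_sig_succ.
Qed.

Lemma delta_word_dshift m n w : n < m -> in_B n w ->
  beq m (delta_word n ++ dshift w) (w ++ delta_word n).
Proof.
  intros Hn. induction w as [|[i b] w IH]; intros Hw.
  - now rewrite app_nil_r.
  - inversion_clear Hw as [|? ? Hi Hw'].
    change (dshift ((i, b) :: w)) with ([(S i, b)] ++ dshift w).
    rewrite app_assoc, delta_word_letter, <- app_assoc, IH by assumption.
    reflexivity.
Qed.

Lemma dshift_winv_delta_word m n w : n < m -> in_B n w ->
  beq m (dshift w ++ winv (delta_word n)) (winv (delta_word n) ++ w).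
Proof.
  intros Hn Hw. apply semiconj_winv_conj.
  - now apply in_B_delta_word.
  - now apply delta_word_dshift.
Qed.

Theorem proposition2 (n : nat) (p p' s s' : word) :
  2 <= n ->
  in_B n p -> in_B n p' -> in_B n s ->
  beq (n + 1) p' (sconj s p) ->
  in_B (n + 1) s' ->
  (beq (n + 1) (p' ++ winv (delta_word n))
       (s' ++ (dshift p ++ sig 1 ++ winv (delta_word n)) ++ winv s')
   <->
   centralizes (n + 1) (winv s' ++ s) (dshift p ++ sig 1 ++ winv (delta_word n))).
Proof.
  intros _ _ _ Hs Hp' Hs'.
  set (x := dshift p ++ sig 1 ++ winv (delta_word n)).
  assert (Hconj : beq (n + 1) (p' ++ winv (delta_word n)) (s ++ x ++ winv s)).
  { rewrite Hp'. unfold sconj, x. rewrite <- !app_assoc.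
    rewrite (dshift_winv_delta_word (n + 1) n (winv s)) by (lia || now apply in_B_winv).
    reflexivity. }
  rewrite Hconj. apply conj_beq_iff_centralizes; [|exact Hs'].
  apply (in_B_mono n); [lia | exact Hs].
Qed.
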